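(* Let $n\ge4$. The set $\{g_1,\dots,g_{n-3},h_1\}$ yields a duality on the algebra $\mathbf C_n$; that is, for the alter ego $(C_n;g_1,\dots,g_{n-3},h_1,\mathscr T)$, the evaluation map $e_{\mathbf C_n}\colon\mathbf C_n\to ED(\mathbf C_n)$ is an isomorphism.
   Context: $\mathbf C_n$ is the Heyting algebra whose universe is the chain $\{0<1<\dots<n-1\}$, with lattice operations min and max, $\bot=0$, $\top=n-1$, and $a\to b=\top$ if $a\le b$, $a\to b=b$ if $b<a$. $\mathcal G_n$ is the class of algebras isomorphic to subalgebras of direct powers of $\mathbf C_n$; $\mathcal G_n(\mathbf A,\mathbf C_n)$ is the set of Heyting homomorphisms $\mathbf A\to\mathbf C_n$. $h_1$ is the endomorphism of $\mathbf C_n$ with $h_1(k)=k+1$ for $1\le k<n-1$ and $h_1(k)=k$ for $k\in\{0,n-1\}$. For $1\le i\le n-3$, $g_i$ is the partial endomorphism with domain $C_n\setminus\{i\}$ given by $g_i(i+1)=i$ and $g_i(k)=k$ for $k\notin\{i,i+1\}$. Natural duality set-up: an alter ego here is $(C_n;P,\mathscr T)$ with $P$ a set of total and partial endomorphisms of $\mathbf C_n$ (homomorphisms from subalgebras of $\mathbf C_n$ into $\mathbf C_n$) and $\mathscr T$ discrete. Powers carry the product topology and pointwise-lifted operations: for $p\in P$, $p^S(x)=p\circ x$, defined iff $x(s)\in\operatorname{dom}p$ for all $s\in S$. A substructure is a subset closed under all these (partial) operations wherever defined. $\mathcal X$ is the class of topological structures isomorphic to closed substructures of powers (empty one included); morphisms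 are continuous maps $\varphi$ preserving total operations and, for partial $p$, such that $x\in\operatorname{dom}p^{\mathbf X}$ implies $\varphi(x)\in\operatorname{dom}p^{\mathbf Y}$ and $\varphi(p^{\mathbf X}(x))=p^{\mathbf Y}(\varphi(x))$. For $\mathbf A\in\mathcal G_n$, $D(\mathbf A)=\mathcal G_n(\mathbf A,\mathbf C_n)$ viewed as a closed substructure of the power with exponent $A$; for $\mathbf X\in\mathcal X$, $E(\mathbf X)$ is the set of $\mathcal X$-morphisms from $\mathbf X$ to the alter ego, a subalgebra of $\mathbf C_n^X$. The evaluation $e_{\mathbf A}\colon\mathbf A\to ED(\mathbf A)$, $e_{\mathbf A}(a)(x)=x(a)$, is always an embedding; $P$ yields a duality on $\mathbf A$ if $e_{\mathbf A}$ is surjective. *)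

From mathcomp Require Import all_boot all_order.
Set Implicit Arguments. Unset Strict Implicit. Unset Printing Implicit Defensive.
Import Order.TTheory.
Local Open Scope order_scope.

(* The chain C_n = {0 < 1 < ... < n-1}, carried by 'I_(n.-1).+1
   (which is the n-element ordinal type as soon as n >= 1). *)
Definition C (n : nat) : finType := 'I_n.-1.+1.

Definition Cbot (n : nat) : C n := ord0.
Definition Ctop (n : nat) : C n := ord_max.
Definition Cmeet (n : nat) (a b : C n) : C n := Order.min a b.
Definition Cjoin (n : nat) (a b : C n) : C n := Order.max a b.
Definition Cimp (n : nat) (a b : C n) : C n := if a <= b then Ctop n else b.

Definition is_hom (n : nat) (f : {ffun C n -> C n}) : Prop :=
  [/\ f (Cbot n) = Cbot n, f (Ctop n) = Ctop n,
      forall a b, f (Cmeet a b) = Cmeet (f a) (f b),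
      forall a b, f (Cjoin a b) = Cjoin (f a) (f b) &
      forall a b, f (Cimp a b) = Cimp (f a) (f b)].

Definition h1 (n : nat) (k : C n) : C n :=
  if (0 < val k)%N && (val k < n.-1)%N then inord (val k).+1 else k.

(* g_i, partial with domain C_n \ {i}: g_i(i+1) = i, identity elsewhere on
   the domain.  The value at i (outside the domain) is irrelevant; it is
   set to i. *)
Definition g (n i : nat) (k : C n) : C n :=
  if val k == i.+1 then inord i else k.

(* The points of D(C_n) are the homomorphisms x; the lifted operations are
   pointwise: h_1^D(x) = h_1 o x, and g_i^D(x) = g_i o x, defined iff
   x(a) <> i for all a.  A morphism phi : D(C_n) -> alter ego is given as a
   function on all of {ffun C n -> C n}; only its values on homs matter. *)
Definition dual_morphism (n : nat) (phi : {ffun C n -> C n} -> C n) : Prop :=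
  (forall x, is_hom x -> phi [ffun a => h1 (x a)] = h1 (phi x)) /\
  (forall i, (1 <= i)%N -> (i <= n - 3)%N ->
     forall x, is_hom x -> (forall a : C n, nat_of_ord (x a) != i :> nat) ->
       nat_of_ord (phi x) != i :> nat /\ phi [ffun a => @g n i (x a)] = @g n i (phi x)).

From mathcomp Require Import all_boot all_order.
From mathcomp Require Import zify.
Set Implicit Arguments. Unset Strict Implicit. Unset Printing Implicit Defensive.
Import Order.TTheory.

(* Injectivity of the evaluation map is witnessed by the identity endomorphism.
   For surjectivity, let phi be a morphism D(C_n) -> alter ego and a0 := phi(id);
   we show phi x = x(a0) for every endomorphism x.  The endomorphisms of C_n are
   exactly the maps fixing 0 and n-1 that are strictly increasing until they
   reach n-1 and constant afterwards (Lemma homP; such maps are handled as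
   functions on nat, "chain maps").  Every endomorphism other than id arises
   from a smaller one (for the measure mu) by one of the operations:
   - if x(1) = 1, x = g_i o y with i + 1 the first point moved by x, where y
     differs from x only at i, sent to i+1 (Lemma lower_step);
   - if x(1) > 1, x = h_1 o y with y lowering every value of x below the top by
     one and keeping one point fewer at the top (Lemma shift_step).
   Since phi commutes with h_1 and with g_i on its domain, well-founded
   induction on mu gives phi x = x(a0) (Lemma dual_morphism_evaluation). *)

Lemma val_meet n (a b : C n) : nat_of_ord (Cmeet a b) = minn a b.
Proof.
rewrite /Cmeet /Order.min; have -> : (a < b)%O = (a < b)%N by [].
by case: ltnP => h /=; lia.
Qed.

Lemma val_join n (a b : C n) : nat_of_ord (Cjoin a b) = maxn a b.
Proof.
rewrite /Cjoin /Order.max; have -> : (a < b)%O = (a < b)%N by [].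
by case: ltnP => h /=; lia.
Qed.

Lemma val_imp n (a b : C n) :
  nat_of_ord (Cimp a b) = if (nat_of_ord a <= nat_of_ord b)%N then n.-1 else b.
Proof. by rewrite /Cimp -[(a <= b)%O]/(a <= b)%N; case: ifP. Qed.

Lemma meetE n (a b : C n) : Cmeet a b = if a <= b then a else b.
Proof. by apply: ord_inj; rewrite val_meet; case: leqP; lia. Qed.

Lemma joinE n (a b : C n) : Cjoin a b = if a <= b then b else a.
Proof. by apply: ord_inj; rewrite val_join; case: leqP; lia. Qed.

Lemma impE n (a b : C n) : Cimp a b = if a <= b then Ctop n else b.
Proof. by []. Qed.

Definition natf n (x : {ffun C n -> C n}) (c : nat) : nat := x (inord c).

Definition of_nat n (f : nat -> nat) : {ffun C n -> C n} := [ffun c : C n => inord (f c)].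

Lemma natf_val n (x : {ffun C n -> C n}) (c : C n) : nat_of_ord (x c) = natf x c.
Proof. by rewrite /natf inord_val. Qed.

Lemma natf_le n (x : {ffun C n -> C n}) c : natf x c <= n.-1.
Proof. by rewrite -ltnS ltn_ord. Qed.

Lemma natf_inj n (x y : {ffun C n -> C n}) :
  (forall c, c <= n.-1 -> natf x c = natf y c) -> x = y.
Proof.
move=> eq_xy; apply/ffunP => c; apply: ord_inj.
by rewrite !natf_val eq_xy // -ltnS ltn_ord.
Qed.

Lemma natf_of_nat n (f : nat -> nat) c :
  c <= n.-1 -> f c <= n.-1 -> natf (of_nat n f) c = f c.
Proof. by move=> cT fcT; rewrite /natf ffunE !inordK. Qed.

Definition chain_map (n : nat) (f : nat -> nat) : Prop :=
  [/\ f 0 = 0, f n.-1 = n.-1, (forall c, c <= n.-1 -> f c <= n.-1) &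
      forall a b, a < b -> b <= n.-1 -> f a < f b \/ (f a = n.-1 /\ f b = n.-1)].

Lemma chain_map_ext n (f f' : nat -> nat) :
  (forall c, c <= n.-1 -> f c = f' c) -> chain_map n f -> chain_map n f'.
Proof.
move=> eq_ff' [f0 fT fle fstrict]; split.
- by rewrite -eq_ff'.
- by rewrite -eq_ff'.
- by move=> c cT; rewrite -eq_ff' // fle.
- by move=> a b ab bT; rewrite -!eq_ff' //; [apply: fstrict | lia].
Qed.

Lemma chain_mono n f a b : chain_map n f -> a <= b -> b <= n.-1 -> f a <= f b.
Proof.
case=> _ _ _ fstrict; rewrite leq_eqVlt => /orP[/eqP -> // | ab bT].
by case: (fstrict a b ab bT); lia.
Qed.

(* Preservation of meet and of b -> a (= a for a < b) forces strictness below the top. *)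
Lemma hom_strict n (x : {ffun C n -> C n}) (a b : C n) : is_hom x -> a < b ->
  x a < x b \/ (x a = n.-1 :> nat /\ x b = n.-1 :> nat).
Proof.
case=> _ _ xmeet _ ximp ab.
have /(congr1 (@nat_of_ord _)) := xmeet a b; rewrite meetE (ltnW ab) val_meet => xa_le.
have /(congr1 (@nat_of_ord _)) := ximp b a; rewrite impE leqNgt ab /= val_imp => xa_imp.
move: xa_le xa_imp; case: (x a) => u ?; case: (x b) => v v_lt /=.
case: (leqP v u) => vu; lia.
Qed.

(* Conversely, strictness below the top gives monotonicity, hence a homomorphism. *)
Lemma strict_hom n (x : {ffun C n -> C n}) :
  nat_of_ord (x ord0) = 0 -> nat_of_ord (x ord_max) = n.-1 ->
  (forall a b : C n, a < b ->
     x a < x b \/ (x a = n.-1 :> nat /\ x b = n.-1 :> nat)) ->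
  is_hom x.
Proof.
move=> x0 xT xstrict.
have xmono (a b : C n) : a <= b -> x a <= x b.
  rewrite leq_eqVlt => /orP[/eqP/ord_inj -> // | /xstrict]; lia.
split; try by apply: ord_inj.
- move=> a b; apply: ord_inj; rewrite meetE val_meet.
  case: (leqP a b) => [ab | /ltnW ba]; [have := xmono _ _ ab | have := xmono _ _ ba]; lia.
- move=> a b; apply: ord_inj; rewrite joinE val_join.
  case: (leqP a b) => [ab | /ltnW ba]; [have := xmono _ _ ab | have := xmono _ _ ba]; lia.
- move=> a b; apply: ord_inj; rewrite impE val_imp.
  case: (leqP a b) => [/xmono -> // | /xstrict].
  by case: (leqP (x a) (x b)) => h; lia.
Qed.

Lemma homP n (x : {ffun C n -> C n}) : is_hom x <-> chain_map n (natf x).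
Proof.
have inord0 : (inord 0 : C n) = ord0 by apply: ord_inj; rewrite inordK.
have inordT : (inord n.-1 : C n) = ord_max by apply: ord_inj; rewrite inordK.
split=> [xhom | [x0 xT _ xstrict]].
- split; [by rewrite /natf inord0; case: xhom => -> | | exact: (fun c _ => natf_le x c) |].
  + by rewrite /natf inordT; case: xhom => _ ->.
  + move=> a b ab bT; apply: hom_strict => //; rewrite !inordK; lia.
- apply: strict_hom; [by rewrite natf_val | by rewrite natf_val |].
  by move=> a b ab; rewrite !natf_val; apply: xstrict; rewrite // -ltnS.
Qed.

Lemma of_natP n (f : nat -> nat) : chain_map n f ->
  is_hom (of_nat n f) /\ forall c, c <= n.-1 -> natf (of_nat n f) c = f c.
Proof.
move=> f_chain; have [_ _ fle _] := f_chain.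
have natf_f c : c <= n.-1 -> natf (of_nat n f) c = f c by move=> cT; rewrite natf_of_nat ?fle.
split=> //; apply/homP; apply: chain_map_ext f_chain => c cT; exact/esym/natf_f.
Qed.

Lemma id_hom n : is_hom [ffun c : C n => c].
Proof.
apply/homP; have natf_id c : c <= n.-1 -> natf [ffun c : C n => c] c = c.
  by move=> cT; rewrite /natf ffunE inordK.
apply: (@chain_map_ext n id) => [c cT | ]; first by rewrite natf_id.
by split=> // a b ab _; left.
Qed.

Definition shift_nat (n k : nat) : nat := if (0 < k) && (k < n.-1) then k.+1 else k.

Definition lower_nat (i k : nat) : nat := if k == i.+1 then i else k.

Lemma natf_h1 n (y : {ffun C n -> C n}) c :
  natf [ffun a => h1 (y a)] c = shift_nat n (natf y c).
Proof. by rewrite /natf ffunE /h1 /shift_nat; case: ifP => // /andP[_ lt]; rewrite inordK. Qed.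

Lemma natf_g n i (y : {ffun C n -> C n}) c :
  natf [ffun a => g i (y a)] c = lower_nat i (natf y c).
Proof.
rewrite /natf ffunE /g /lower_nat; case: eqP => // yc.
by rewrite inordK //; apply: ltnW; rewrite -yc ltn_ord.
Qed.

(* The termination measure: a value v < n-1 weighs n - v, the top value weighs 4n;
   raising a value below n-2 decreases the weight, and removing one point from
   the top outweighs raising every other value by one. *)
Definition weight (n v : nat) : nat := if v == n.-1 then 4 * n else n - v.

Definition mu (n : nat) (f : nat -> nat) : nat := \sum_(c : C n) weight n (f c).

Lemma mu_ext n (f f' : nat -> nat) :
  (forall c, c <= n.-1 -> f c = f' c) -> mu n f = mu n f'.
Proof. by move=> eq_ff'; apply: eq_bigr => c _; rewrite eq_ff' // -ltnS. Qed.

Lemma mu_lt n (f f' : nat -> nat) c0 e : 0 < n -> c0 <= n.-1 ->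
  (forall c, c <= n.-1 -> c != c0 -> weight n (f' c) <= weight n (f c) + e) ->
  weight n (f' c0) + e * n < weight n (f c0) -> mu n f' < mu n f.
Proof.
move=> n_gt0 c0T w_le w_c0; rewrite /mu.
rewrite (bigD1 (inord c0)) // [X in _ < X](bigD1 (inord c0)) //= inordK //.
set P := fun c : C n => c != inord c0.
have rest : \sum_(c | P c) weight n (f' c) <= \sum_(c | P c) weight n (f c) + e * n.
  apply: (@leq_trans (\sum_(c | P c) (weight n (f c) + e))).
    apply: leq_sum => c Pc; apply: w_le; first by rewrite -ltnS.
    by apply: contraNneq Pc => <-; rewrite inord_val.
  rewrite big_split /= leq_add2l sum_nat_const mulnC leq_mul2l.
  by apply/orP; right; apply: leq_trans (max_card _) _; rewrite card_ord prednK.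
apply: leq_ltn_trans (leq_add (leqnn _) rest) _.
by rewrite [_ + e * n]addnC addnA ltn_add2r.
Qed.

Definition update (f : nat -> nat) (i v : nat) : nat -> nat :=
  fun c => if c == i then v else f c.

Section Reduction.

Variables (n : nat) (f : nat -> nat).
Hypotheses (n_ge4 : 4 <= n) (f_chain : chain_map n f).

(* If f(1) = 1 and j is the first point moved by f, then f = g_(j-1) o f' where
   f' sends j-1 to j, and f' never takes the value j-1. *)
Lemma lower_step : f 1 = 1 -> (exists c, (c <= n.-1) && (f c != c)) ->
  exists i f', [/\ 1 <= i <= n - 3, chain_map n f', forall c, c <= n.-1 -> f' c != i,
                  mu n f' < mu n f & forall c, c <= n.-1 -> f c = lower_nat i (f' c)].
Proof.
move=> f1 not_id; have [f0 fT fle fstrict] := f_chain.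
case: (ex_minnP not_id) => j /andP[jT /eqP fj_ne] j_min.
have below c : c < j -> f c = c.
  move=> cj; case: (eqVneq (f c) c) => // fc_ne.
  by have := j_min c; rewrite fc_ne andbT => /(_ (leq_trans (ltnW cj) jT)); lia.
have j_ge2 : 2 <= j by case: j fj_ne {below j_min jT} => [|[|j]]; rewrite ?f0 ?f1.
have fj_gt : j < f j.
  have := below j.-1 (ltac:(lia)); case: (fstrict j.-1 j); lia.
have after c : j <= c -> c <= n.-1 -> j < f c.
  by move=> jc cT; apply: leq_trans fj_gt (chain_mono f_chain jc cT).
have jT2 : j < n.-1 by apply: leq_trans fj_gt (fle j jT).
exists j.-1, (update f j.-1 j); rewrite /update; split.
- lia.
- split; [by case: eqP => ?; lia | by case: eqP => ?; lia | |].
  + by move=> c cT; case: eqP => ?; [lia | exact: fle].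
  + move=> a b ab bT; case: eqP => [a_eq | _]; case: eqP => [b_eq | _]; try lia.
    - by left; apply: after; lia.
    - by left; rewrite below; lia.
    - exact: fstrict.
- move=> c cT; apply/eqP; case: eqP => [_ | c_ne]; first lia.
  by case: (ltnP c j) => [cj | jc]; [have := below c cj | have := after c jc cT]; lia.
- apply: (@mu_lt _ _ _ j.-1 0); [lia | lia | |].
  + by move=> c _ /negbTE ->; rewrite addn0.
  + rewrite eqxx below; last lia.
    by rewrite /weight; do 2 case: eqP => ?; lia.
- move=> c cT; rewrite /lower_nat; case: (eqVneq c j.-1) => [-> | c_ne].
  + by rewrite (prednK (ltnW j_ge2)) eqxx below; lia.
  + case: eqP => // fc_j; exfalso.
    by case: (ltnP c j) => [cj | jc]; [have := below c cj | have := after c jc cT]; lia.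
Qed.

(* If f(1) > 1 and k is the first point sent to the top, then f = h_1 o f' where
   f' lowers the values below k by one and sends k to n-2. *)
Lemma shift_step : f 1 != 1 ->
  exists f', [/\ chain_map n f', mu n f' < mu n f &
                  forall c, c <= n.-1 -> f c = shift_nat n (f' c)].
Proof.
move=> /eqP f1_ne; have [f0 fT fle fstrict] := f_chain.
have f_ge2 c : 1 <= c -> c <= n.-1 -> 2 <= f c.
  move=> c1 cT; apply: leq_trans (chain_mono f_chain c1 cT).
  by case: (fstrict 0 1); lia.
have grow c : 1 <= c -> c <= n.-1 -> c < f c \/ f c = n.-1.
  elim: c => [// | c IHc] _ cT; case: (posnP c) => [-> | c_gt0]; first by left; apply: f_ge2; lia.
  by case: (IHc c_gt0 (ltnW cT)); case: (fstrict c c.+1 (ltnSn c) cT); lia.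
have top_ex : exists c, f c == n.-1 by exists n.-1; rewrite fT.
case: (ex_minnP top_ex) => k /eqP fk k_min.
have kT : k <= n.-2.
  apply: k_min; have := fle n.-2; case: (grow n.-2); lia.
have k_gt0 : 0 < k by rewrite lt0n; apply/eqP => k0; move: fk; rewrite k0 f0; lia.
have below c : c < k -> f c < n.-1.
  move=> ck; have := fle c ltac:(lia); case: (eqVneq (f c) n.-1) => [fc | fc_ne]; last lia.
  by have := k_min c; rewrite fc eqxx => /(_ isT); lia.
have after c : k <= c -> c <= n.-1 -> f c = n.-1.
  by move=> kc cT; have := chain_mono f_chain kc cT; have := fle c cT; lia.
exists (fun c => if c < k then (f c).-1 else if c == k then n.-2 else n.-1); split.
- split; [by rewrite k_gt0 f0 | by case: ltnP => ?; [lia | case: eqP => ?; lia] | |].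
  + by move=> c cT; case: ltnP => [/below | _]; [lia | case: eqP => ?; lia].
  + move=> a b ab bT; case: (ltnP a k) => ak; case: (ltnP b k) => bk.
    * left; have := f_ge2 b ltac:(lia) bT; have := below a ak.
      case: (posnP a) => [-> | a_gt0]; first by rewrite f0; lia.
      by have := f_ge2 a a_gt0 ltac:(lia); case: (fstrict a b ab bT); lia.
    * by left; have := below a ak; case: eqP => ?; lia.
    * lia.
    * case: eqP => [_ | a_ne]; first by left; case: eqP => ?; lia.
      by right; case: eqP => ?; lia.
- apply: (@mu_lt _ _ _ k 1); [lia | lia | |].
  + move=> c cT /negbTE ck; rewrite ck /weight; case: ltnP => [/below | kc].
    * by case: eqP; case: eqP => ?; lia.
    * by rewrite (after c kc cT) eqxx; lia.
  + by rewrite ltnn eqxx fk /weight eqxx; case: eqP => ?; lia.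
- move=> c cT; rewrite /shift_nat; case: (ltnP c k) => [ck | kc].
  + case: (posnP c) => [-> | c_gt0]; first by rewrite f0.
    by have := below c ck; have := f_ge2 c c_gt0 cT; case: ifP => ?; lia.
  + by rewrite (after c kc cT); case: eqP; case: ifP => ?; lia.
Qed.

End Reduction.

Lemma dual_morphism_evaluation n (n_ge4 : 4 <= n) (phi : {ffun C n -> C n} -> C n) :
  dual_morphism phi -> forall x, is_hom x -> phi x = x (phi [ffun c => c]).
Proof.
case=> phi_h1 phi_g x; have [m] := ubnP (mu n (natf x)).
elim: m x => // m IH x mu_x x_hom; have x_chain := (homP x).1 x_hom.
have IH_below y : is_hom y -> mu n (natf y) < mu n (natf x) -> phi y = y (phi [ffun c => c]).
  by move=> y_hom lt_yx; apply: IH => //; apply: leq_trans lt_yx _.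
case: (eqVneq (natf x 1) 1) => [x1 | x1].
- case: (pickP (fun c : C n => x c != c)) => [c xc | x_id]; last first.
    have -> : x = [ffun c : C n => c] by apply/ffunP => c; rewrite ffunE; apply/eqP/negbFE/x_id.
    by rewrite ffunE.
  have not_id : exists c, (c <= n.-1) && (natf x c != c).
    by exists c; rewrite -natf_val xc andbT -ltnS.
  have [i [f' [/andP[i_ge1 i_le] f'_chain f'_avoid mu_lt x_eq]]] := lower_step n_ge4 x_chain x1 not_id.
  have [y_hom y_eq] := of_natP f'_chain.
  have y_avoid (a : C n) : of_nat n f' a != i :> nat.
    by rewrite natf_val y_eq ?f'_avoid // -ltnS.
  have -> : x = [ffun a => g i (of_nat n f' a)].
    by apply: natf_inj => c' c'T; rewrite natf_g y_eq // -x_eq.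
  have [_ ->] := phi_g i i_ge1 i_le _ y_hom y_avoid.
  by rewrite ffunE IH_below // (mu_ext y_eq).
- have [f' [f'_chain mu_lt x_eq]] := shift_step n_ge4 x_chain x1.
  have [y_hom y_eq] := of_natP f'_chain.
  have -> : x = [ffun a => h1 (of_nat n f' a)].
    by apply: natf_inj => c' c'T; rewrite natf_h1 y_eq // -x_eq.
  by rewrite phi_h1 // ffunE IH_below // (mu_ext y_eq).
Qed.

Theorem proposition3p2 (n : nat) (hn : (4 <= n)%N) :
  (* e_{C_n} is injective *)
  (forall a b : C n, (forall x, is_hom x -> x a = x b) -> a = b) /\
  (* e_{C_n} is surjective onto E(D(C_n)) *)
  (forall phi : {ffun C n -> C n} -> C n, dual_morphism phi ->
     exists a : C n, forall x, is_hom x -> phi x = x a).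
Proof.
split=> [a b eval_ab | phi phi_dual].
- by have := eval_ab _ (id_hom n); rewrite !ffunE.
- by exists (phi [ffun c => c]); exact: dual_morphism_evaluation.
Qed.
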